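(* Consider the online optimization problem with multi-step memory cost described in the context. Assume that for every $t$ the hitting cost $f(\cdot,y_t):\mathcal X\to\mathbb R$ is $\alpha$-polyhedral for some $\alpha>0$, and let $\beta=\sum_{i=1}^q\|C_i\|$, where $\|C_i\|$ is the matrix norm induced by the $l_p$ vector norm. Then the algorithm Robust, which chooses $x_t=\arg\min_{x\in\mathcal X}f(x,y_t)$ for every $t=1,\dots,T$, satisfies for every input $\bm s$ $$\mathrm{cost}(\mathrm{Robust},\bm s)\le \max\!\left(\tfrac{\beta+1}{\alpha},1\right)\mathrm{cost}(\mathrm{OPT},\bm s).$$
   Context: Problem: Let $\mathcal X\subseteq\mathbb R^d$, $\mathcal Y\subseteq\mathbb R^m$, $f:\mathcal X\times\mathcal Y\to[0,\infty)$, $\|\cdot\|$ the $l_p$ norm on $\mathbb R^d$ ($p\ge1$), a memory length $q\ge1$ and matrices $C_1,\dots,C_q\in\mathbb R^{d\times d}$. An instance $\bm s$ consists of given initial actions $x_{1-q},\dots,x_0\in\mathcal X$ (shared by all algorithms) and contexts $y_1,\dots,y_T\in\mathcal Y$. At each step $t$ the context $y_t$ is revealed and an online algorithm irrevocably chooses $x_t\in\mathcal X$. The memory cost is $d(x_t,x_{t-q:t-1})=\|x_t-\sum_{i=1}^q C_i x_{t-i}\|$ and the total cost of an algorithm is $\sum_{t=1}^T f(x_t,y_t)+d(x_t,x_{t-q:t-1})$. $\mathrm{cost}(\mathrm{OPT},\bm s)$ is the optimal offline cost, i.e. the infimum of this total cost over all $x_1,\dots,x_T\in\mathcal X$ with all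 contexts known in advance. $\alpha$-polyhedral: $f(\cdot,y)$ has a unique minimizer $x^*\in\mathcal X$ and $f(x,y)-f(x^*,y)\ge\alpha\|x-x^*\|$ for all $x\in\mathcal X$. *)

From HB Require Import structures.
From mathcomp Require Import all_boot all_order all_algebra.
From mathcomp Require Import all_classical all_reals all_analysis.
Set Implicit Arguments. Unset Strict Implicit. Unset Printing Implicit Defensive.
Import Order.TTheory GRing.Theory Num.Theory.
Local Open Scope classical_set_scope.
Local Open Scope ring_scope.

Definition lpnorm (R : realType) (d : nat) (p : R) (x : 'cV[R]_d) : R :=
  (\sum_(i < d) `|x i 0| `^ p) `^ p^-1.

Definition opnorm (R : realType) (d : nat) (p : R) (A : 'M[R]_d) : R :=
  sup [set lpnorm p (A *m x) | x in [set x : 'cV[R]_d | lpnorm p x <= 1]].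

(* Trajectories are indexed by integers: x t is the action at time t,
   times 1-q..0 hold the given initial actions.  C i (i : 'I_q) stands for C_{i+1}. *)
Definition memcost (R : realType) (d q : nat) (p : R) (C : 'I_q -> 'M[R]_d)
  (x : int -> 'cV[R]_d) (t : int) : R :=
  lpnorm p (x t - \sum_(i < q) C i *m x (t - (i.+1)%:Z)).

Definition total_cost (R : realType) (d m q : nat) (p : R)
  (f : 'cV[R]_d -> 'cV[R]_m -> R) (C : 'I_q -> 'M[R]_d)
  (y : nat -> 'cV[R]_m) (T : nat) (x : int -> 'cV[R]_d) : R :=
  \sum_(1 <= t < T.+1) (f (x t%:Z) (y t) + memcost p C x t%:Z).

Definition admissible (R : realType) (d q : nat) (X : set 'cV[R]_d)
  (x0 : int -> 'cV[R]_d) (T : nat) (x : int -> 'cV[R]_d) : Prop :=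
  (forall t : int, 1 - q%:Z <= t <= 0 -> x t = x0 t) /\
  (forall t : nat, (1 <= t <= T)%N -> X (x t%:Z)).

Definition opt_cost (R : realType) (d m q : nat) (p : R) (X : set 'cV[R]_d)
  (f : 'cV[R]_d -> 'cV[R]_m -> R) (C : 'I_q -> 'M[R]_d)
  (x0 : int -> 'cV[R]_d) (y : nat -> 'cV[R]_m) (T : nat) : R :=
  inf [set total_cost p f C y T x | x in @admissible R d q X x0 T].

Definition is_minimizer (R : realType) (d m : nat) (X : set 'cV[R]_d)
  (f : 'cV[R]_d -> 'cV[R]_m -> R) (y : 'cV[R]_m) (xs : 'cV[R]_d) : Prop :=
  X xs /\ (forall x, X x -> f xs y <= f x y).

Definition polyhedral (R : realType) (d m : nat) (p : R) (X : set 'cV[R]_d)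
  (f : 'cV[R]_d -> 'cV[R]_m -> R) (y : 'cV[R]_m) (alpha : R) : Prop :=
  exists xs, is_minimizer X f y xs /\
    (forall x', is_minimizer X f y x' -> x' = xs) /\
    (forall x, X x -> alpha * lpnorm p (x - xs) <= f x y - f xs y).

From HB Require Import structures.
From mathcomp Require Import all_boot all_order all_algebra.
From mathcomp Require Import all_classical all_reals all_analysis.
From mathcomp Require Import ring lra zify.
Import Order.TTheory GRing.Theory Num.Theory.
Local Open Scope classical_set_scope.
Local Open Scope ring_scope.

(* Compare Robust with an arbitrary admissible trajectory x and put e_t = ||x_t - xr_t||.
   Polyhedrality gives alpha e_t <= f(x_t, y_t) - f(xr_t, y_t), and the triangle inequality
   gives memcost(xr, t) <= e_t + memcost(x, t) + sum_i ||C_i|| e_(t-i).  As e vanishes on the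
   shared initial actions, summing over t bounds the memory cost of Robust by that of x plus
   (1 + beta) sum_t e_t <= ((1 + beta) / alpha) (hitting cost of x - hitting cost of Robust). *)

Definition lpsum (R : realType) (d : nat) (p : R) (x : 'cV[R]_d) : R :=
  \sum_(i < d) `|x i 0| `^ p.
Arguments lpsum {R d} p x.

Section LpNorm.
Context {R : realType} {d : nat} {p : R} (p_ge1 : 1 <= p).
Implicit Types (x u v : 'cV[R]_d) (A : 'M[R]_d).

Let p_gt0 : 0 < p. Proof. exact: lt_le_trans p_ge1. Qed.
Let p_neq0 : p != 0. Proof. exact: lt0r_neq0. Qed.

Lemma powRK (a : R) : 0 <= a -> (a `^ p) `^ p^-1 = a.
Proof. by move=> a0; rewrite -powRrM mulfV // powRr1. Qed.

Lemma powRVK (a : R) : 0 <= a -> (a `^ p^-1) `^ p = a.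
Proof. by move=> a0; rewrite -powRrM mulVf // powRr1. Qed.

Lemma lpsum_ge0 x : 0 <= lpsum p x.
Proof. by apply: sumr_ge0 => i _; apply: powR_ge0. Qed.

Lemma lpnorm_ge0 x : 0 <= lpnorm p x.
Proof. exact: powR_ge0. Qed.

Lemma lpsumE x : lpsum p x = lpnorm p x `^ p.
Proof. by rewrite powRVK ?lpsum_ge0. Qed.

Lemma lpnorm_le1 x : lpsum p x <= 1 -> lpnorm p x <= 1.
Proof.
move=> le1; have := @ge0_ler_powR _ p^-1 _ (lpsum p x) 1.
by rewrite powR1; apply; rewrite ?invr_ge0 ?nnegrE ?lpsum_ge0 ?(ltW p_gt0).
Qed.

Lemma lpnorm_coord x i : `|x i 0| <= lpnorm p x.
Proof.
rewrite -[leLHS](powRK _ (normr_ge0 (x i 0))).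
apply: ge0_ler_powR; rewrite ?invr_ge0 ?nnegrE ?powR_ge0 ?lpsum_ge0 ?(ltW p_gt0) //.
rewrite /lpsum (bigD1 i) //= lerDl; by apply: sumr_ge0 => j _; apply: powR_ge0.
Qed.

Lemma lpnorm_eq0 x : lpnorm p x = 0 -> x = 0.
Proof.
move=> x0; apply/matrixP => i j; rewrite (ord1 j) mxE.
by apply/eqP; rewrite -normr_le0 -x0 lpnorm_coord.
Qed.

Lemma lpnormZ c x : lpnorm p (c *: x) = `|c| * lpnorm p x.
Proof.
rewrite /lpnorm (eq_bigr (fun i => `|c| `^ p * `|x i 0| `^ p)); last first.
  by move=> i _; rewrite mxE normrM powRM.
by rewrite -mulr_sumr powRM ?powR_ge0 ?powRK //; exact: lpsum_ge0.
Qed.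

Lemma lpnorm0 : lpnorm p (0 : 'cV[R]_d) = 0.
Proof. by rewrite -(scale0r 0) lpnormZ normr0 mul0r. Qed.

Lemma lpnormN x : lpnorm p (- x) = lpnorm p x.
Proof. by rewrite -scaleN1r lpnormZ normrN1 mul1r. Qed.

Lemma lpnormB x y : lpnorm p (x - y) = lpnorm p (y - x).
Proof. by rewrite -lpnormN opprB. Qed.

Lemma lpsum_convex (l : R) u v : 0 <= l <= 1 ->
  lpsum p (l *: u + (1 - l) *: v) <= l * lpsum p u + (1 - l) * lpsum p v.
Proof.
move=> /andP[l0 l1]; rewrite /lpsum !mulr_sumr -big_split /=.
apply: ler_sum => i _; rewrite !mxE.
apply: (@le_trans _ _ ((l * `|u i 0| + (1 - l) * `|v i 0|) `^ p)).
  apply: ge0_ler_powR; rewrite ?nnegrE ?(ltW p_gt0) ?addr_ge0 ?mulr_ge0 ?subr_ge0 //.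
  have l'0 : 0 <= 1 - l by rewrite subr_ge0.
  by rewrite (le_trans (ler_normD _ _)) // !normrM (ger0_norm l0) (ger0_norm l'0).
have := convex_powR p_ge1 (Itv01 l0 l1) (x := `|u i 0|) (y := `|v i 0|).
by rewrite !inE /= !in_itv /= !andbT !normr_ge0 !convRE; apply.
Qed.

Lemma lpsum_normalize x : lpnorm p x != 0 -> lpsum p ((lpnorm p x)^-1 *: x) = 1.
Proof.
move=> x0; rewrite lpsumE lpnormZ ger0_norm ?invr_ge0 ?lpnorm_ge0 // mulVf //.
by rewrite powR1.
Qed.

(* Minkowski: [u + v] is [A + B] times a convex combination of the unit vectors [u / A] and [v / B]. *)
Lemma lpnormD u v : lpnorm p (u + v) <= lpnorm p u + lpnorm p v.
Proof.
have [/lpnorm_eq0->|A0] := eqVneq (lpnorm p u) 0; first by rewrite add0r lpnorm0 add0r.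
have [/lpnorm_eq0->|B0] := eqVneq (lpnorm p v) 0; first by rewrite addr0 lpnorm0 addr0.
move: A0 B0; move Ae : (lpnorm p u) => A A0; move Be : (lpnorm p v) => B B0.
have Agt0 : 0 < A by rewrite lt0r A0 -Ae lpnorm_ge0.
have Bgt0 : 0 < B by rewrite lt0r B0 -Be lpnorm_ge0.
have ABgt0 : 0 < A + B by rewrite addr_gt0.
set l := A / (A + B); set w := l *: (A^-1 *: u) + (1 - l) *: (B^-1 *: v).
have l01 : 0 <= l <= 1.
  by rewrite /l divr_ge0 ?(ltW Agt0) ?(ltW ABgt0) //= ler_pdivrMr // mul1r lerDl (ltW Bgt0).
have uvE : u + v = (A + B) *: w.
  rewrite /w scalerDr !scalerA.
  have -> : (A + B) * l / A = 1 by rewrite /l; field; rewrite !lt0r_neq0.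
  have -> : (A + B) * (1 - l) / B = 1 by rewrite /l; field; rewrite !lt0r_neq0.
  by rewrite !scale1r.
have w_le1 : lpnorm p w <= 1.
  apply: lpnorm_le1; apply: le_trans (lpsum_convex _ _ _ l01) _.
  have := lpsum_normalize u; have := lpsum_normalize v; rewrite Ae Be => -> // -> //.
  by rewrite !mulr1 subrKC.
rewrite uvE lpnormZ ger0_norm ?(ltW ABgt0) // -[leRHS]mulr1.
by rewrite ler_wpM2l ?(ltW ABgt0).
Qed.

Lemma lpnorm_sum {I : Type} (r : seq I) (P : pred I) (F : I -> 'cV[R]_d) :
  lpnorm p (\sum_(i <- r | P i) F i) <= \sum_(i <- r | P i) lpnorm p (F i).
Proof.
elim/big_ind2: _ => [|x1 y1 x2 y2 h1 h2|//]; first by rewrite lpnorm0.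
exact: le_trans (lpnormD _ _) (lerD h1 h2).
Qed.

Lemma mulmx_colE A x : A *m x = \sum_(j < d) x j 0 *: col j A.
Proof.
apply/matrixP => i k; rewrite !mxE summxE; apply: eq_bigr => j _.
by rewrite !mxE (ord1 k) mulrC.
Qed.

Lemma opnorm_has_sup A :
  has_sup [set lpnorm p (A *m x) | x in [set x : 'cV[R]_d | lpnorm p x <= 1]].
Proof.
split; first by exists (lpnorm p (A *m 0)), 0; rewrite //= lpnorm0 ler01.
exists (\sum_(j < d) lpnorm p (col j A)) => _ [x /= x_le1 <-].
rewrite mulmx_colE; apply: le_trans (lpnorm_sum _ _ _) _.
apply: ler_sum => j _; rewrite lpnormZ ler_piMl ?lpnorm_ge0 //.
exact: le_trans (lpnorm_coord _ _) x_le1.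
Qed.

Lemma opnorm_ge0 A : 0 <= opnorm p A.
Proof.
apply: le_trans (sup_upper_bound (opnorm_has_sup A) _); last first.
  by exists 0; rewrite /= ?lpnorm0 ?ler01.
by rewrite mulmx0 lpnorm0.
Qed.

Lemma lpnorm_mulmx_le A x : lpnorm p (A *m x) <= opnorm p A * lpnorm p x.
Proof.
have [/lpnorm_eq0->|x0] := eqVneq (lpnorm p x) 0; first by rewrite mulmx0 lpnorm0 mulr0.
set z := (lpnorm p x)^-1 *: x.
have z_le1 : lpnorm p z <= 1.
  by rewrite /z lpnormZ ger0_norm ?invr_ge0 ?lpnorm_ge0 // mulVf.
have Az_le : lpnorm p (A *m z) <= opnorm p A.
  by apply: (sup_upper_bound (opnorm_has_sup A)); exists z.
have -> : A *m x = lpnorm p x *: (A *m z) by rewrite scalemxAr scalerA mulfV ?scale1r.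
by rewrite lpnormZ ger0_norm ?lpnorm_ge0 // mulrC ler_wpM2r ?lpnorm_ge0.
Qed.

End LpNorm.

Lemma sum_shift_le (R : numDomainType) (e : int -> R) (j T : nat) :
  (forall s, 0 <= e s) -> (forall s, 1 - j%:Z <= s <= 0 -> e s = 0) ->
  \sum_(1 <= t < T.+1) e (t%:Z - j%:Z) <= \sum_(1 <= t < T.+1) e t%:Z.
Proof.
move=> e_ge0 e_init.
have -> : \sum_(1 <= t < T.+1) e (t%:Z - j%:Z) = \sum_(1 <= t < (T - j).+1) e t%:Z.
  elim: T => [|T IH]; first by rewrite !big_geq.
  rewrite big_nat_recr //= IH.
  have [Tj|jT] := leqP T.+1 j.
    have -> : (T.+1 - j = T - j)%N by lia.
    by rewrite e_init ?addr0 //; apply/andP; split; lia.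
  have -> : (T.+1 - j = (T - j).+1)%N by lia.
  by rewrite [in RHS]big_nat_recr //=; congr (_ + e _); lia.
rewrite (@big_cat_nat _ _ _ (T - j).+1 1 T.+1) //= ?ltnS ?leq_subr // lerDl.
by apply: sumr_ge0 => t _.
Qed.

Section MemoryCost.
Context {R : realType} {d q : nat} {p : R} (p_ge1 : 1 <= p) (C : 'I_q -> 'M[R]_d).
Implicit Types (x z : int -> 'cV[R]_d).

Lemma memcost_le x z t :
  memcost p C z t <= lpnorm p (x t - z t) + memcost p C x t +
    \sum_(i < q) opnorm p (C i) * lpnorm p (x (t - i.+1%:Z) - z (t - i.+1%:Z)).
Proof.
rewrite /memcost; set Sz := \sum_(i < q) _; set Sx := \sum_(i < q) _.
have -> : z t - Sz = (z t - x t) + ((x t - Sx) + (Sx - Sz)) by rewrite !addrA !subrK.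
apply: le_trans (lpnormD p_ge1 _ _) _; rewrite -[leRHS]addrA lpnormB // lerD2l.
apply: le_trans (lpnormD p_ge1 _ _) _; rewrite lerD2l /Sx /Sz -sumrB.
apply: le_trans (lpnorm_sum p_ge1 _ _ _) _; apply: ler_sum => i _.
by rewrite -mulmxBr lpnorm_mulmx_le.
Qed.

Lemma sum_memcost_le x z T : (forall s, 1 - q%:Z <= s <= 0 -> z s = x s) ->
  \sum_(1 <= t < T.+1) memcost p C z t%:Z <= \sum_(1 <= t < T.+1) memcost p C x t%:Z +
    (1 + \sum_(i < q) opnorm p (C i)) * \sum_(1 <= t < T.+1) lpnorm p (x t%:Z - z t%:Z).
Proof.
move=> zx_init; pose e s := lpnorm p (x s - z s).
have e_ge0 s : 0 <= e s by apply: lpnorm_ge0.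
have e_init (i : 'I_q) s : 1 - (i.+1)%:Z <= s <= 0 -> e s = 0.
  move=> /andP[s_ge s_le0]; rewrite /e zx_init ?subrr ?lpnorm0 //.
  by rewrite s_le0 andbT (le_trans _ s_ge) // lerD2l lerN2 lez_nat.
have shift : \sum_(1 <= t < T.+1) \sum_(i < q) opnorm p (C i) * e (t%:Z - i.+1%:Z) <=
    \sum_(i < q) opnorm p (C i) * \sum_(1 <= t < T.+1) e t%:Z.
  rewrite exchange_big /=; apply: ler_sum => i _.
  rewrite -mulr_sumr; apply: ler_wpM2l; first exact: opnorm_ge0.
  exact: sum_shift_le e_ge0 (e_init i).
apply: le_trans (ler_sum _ (fun t _ => memcost_le x z t%:Z)) _.
rewrite !big_split /= mulrDl mul1r -addrA [leLHS]addrCA !lerD2l.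
rewrite mulr_suml; exact: shift.
Qed.

End MemoryCost.

Lemma le_max1_mulD (R : realFieldType) (a b b' c k : R) :
  0 <= a -> 0 <= b -> 0 <= k -> a <= c -> b' <= b + k * (c - a) ->
  a + b' <= Num.max k 1 * (c + b).
Proof.
move=> a_ge0 b_ge0 k_ge0 ac hb'; case: (leP k 1) => [k_le1|k_gt1].
  rewrite mul1r.
  have : k * (c - a) <= c - a by rewrite ler_piMl // subr_ge0.
  lra.
have : a <= k * a by rewrite ler_peMl // ltW.
have : b <= k * b by rewrite ler_peMl // ltW.
move: hb'; rewrite mulrBr mulrDr; lra.
Qed.

Section Competitive.
Context {R : realType} {d m q : nat} {p : R} (p_ge1 : 1 <= p).
Variables (f : 'cV[R]_d -> 'cV[R]_m -> R) (C : 'I_q -> 'M[R]_d).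
Variables (y : nat -> 'cV[R]_m) (T : nat).

Lemma total_costE x : total_cost p f C y T x =
  \sum_(1 <= t < T.+1) f (x t%:Z) (y t) + \sum_(1 <= t < T.+1) memcost p C x t%:Z.
Proof. exact: big_split. Qed.

Lemma total_cost_le_max (alpha : R) (x z : int -> 'cV[R]_d) : 0 < alpha ->
  (forall s, 1 - q%:Z <= s <= 0 -> z s = x s) ->
  (forall t, (1 <= t <= T)%N -> 0 <= f (z t%:Z) (y t)) ->
  (forall t, (1 <= t <= T)%N ->
     alpha * lpnorm p (x t%:Z - z t%:Z) <= f (x t%:Z) (y t) - f (z t%:Z) (y t)) ->
  total_cost p f C y T z <=
    Num.max ((\sum_(i < q) opnorm p (C i) + 1) / alpha) 1 * total_cost p f C y T x.
Proof.
move=> alpha_gt0 zx_init fz_ge0 gap.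
set beta := \sum_(i < q) opnorm p (C i).
set k := (beta + 1) / alpha.
set E := \sum_(1 <= t < T.+1) lpnorm p (x t%:Z - z t%:Z).
set Fx := \sum_(1 <= t < T.+1) f (x t%:Z) (y t).
set Fz := \sum_(1 <= t < T.+1) f (z t%:Z) (y t).
have beta_ge0 : 0 <= beta by apply: sumr_ge0 => i _; exact: opnorm_ge0.
have k_ge0 : 0 <= k by rewrite divr_ge0 ?addr_ge0 // ltW.
have E_ge0 : 0 <= E by apply: sumr_ge0 => t _; exact: lpnorm_ge0.
have gapE : alpha * E <= Fx - Fz.
  by rewrite mulr_sumr -sumrB; apply: ler_sum_nat => t; exact: gap.
have memE : (1 + beta) * E <= k * (Fx - Fz).
  apply: le_trans _ (ler_wpM2l k_ge0 gapE).
  by rewrite mulrA /k (divfK (lt0r_neq0 alpha_gt0)) addrC lexx.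
rewrite !total_costE; apply: le_max1_mulD.
- by rewrite /Fz big_nat; apply: sumr_ge0 => t; exact: fz_ge0.
- by apply: sumr_ge0 => t _; exact: lpnorm_ge0.
- exact: k_ge0.
- by rewrite -subr_ge0; exact: le_trans (mulr_ge0 (ltW alpha_gt0) E_ge0) gapE.
- apply: le_trans (sum_memcost_le p_ge1 C x z T zx_init) _.
  by rewrite lerD2l; exact: memE.
Qed.

End Competitive.

Lemma ler_pM_inf (R : realType) (S : set R) (c M : R) : 0 < M -> S !=set0 ->
  (forall s, S s -> c <= M * s) -> c <= M * inf S.
Proof.
move=> M_gt0 S0 cS; rewrite -ler_pdivrMl //.
by apply: lb_le_inf S0 _ => s Ss; rewrite ler_pdivrMl // cS.
Qed.

Lemma polyhedral_gap (R : realType) (d m : nat) (p alpha : R) (X : set 'cV[R]_d)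
    (f : 'cV[R]_d -> 'cV[R]_m -> R) (y : 'cV[R]_m) (xs x : 'cV[R]_d) :
  polyhedral p X f y alpha -> is_minimizer X f y xs -> X x ->
  alpha * lpnorm p (x - xs) <= f x y - f xs y.
Proof. by case=> xs' [_ [xs'_uniq gap]] /xs'_uniq ->; exact: gap. Qed.

Theorem theorem2 (R : realType) (d m q : nat) (p alpha : R)
  (X : set 'cV[R]_d) (Y : set 'cV[R]_m) (f : 'cV[R]_d -> 'cV[R]_m -> R)
  (C : 'I_q -> 'M[R]_d) (x0 : int -> 'cV[R]_d) (y : nat -> 'cV[R]_m) (T : nat)
  (xr : int -> 'cV[R]_d) :
  1 <= p -> (1 <= q)%N -> 0 < alpha ->
  (forall x z, X x -> Y z -> 0 <= f x z) ->
  (forall t : int, 1 - q%:Z <= t <= 0 -> X (x0 t)) ->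
  (forall t : nat, (1 <= t <= T)%N -> Y (y t)) ->
  (forall t : nat, (1 <= t <= T)%N -> polyhedral p X f (y t) alpha) ->
  (* xr is the trajectory of Robust: initial actions, then x_t = argmin f(.,y_t) *)
  (forall t : int, 1 - q%:Z <= t <= 0 -> xr t = x0 t) ->
  (forall t : nat, (1 <= t <= T)%N -> is_minimizer X f (y t) (xr t%:Z)) ->
  let beta := \sum_(i < q) opnorm p (C i) in
  total_cost p f C y T xr <=
    Num.max ((beta + 1) / alpha) 1 * opt_cost p X f C x0 y T.
Proof.
move=> p_ge1 _ alpha_gt0 f_ge0 _ yY poly xr_init xr_min; cbv zeta.
have xr_adm : @admissible R d q X x0 T xr by split=> // t /xr_min [].
apply: ler_pM_inf; first by rewrite lt_max ltr01 orbT.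
  by exists (total_cost p f C y T xr), xr.
move=> _ [x [x_init xX] <-]; apply: total_cost_le_max => //.
- by move=> s s_init; rewrite xr_init // x_init.
- by move=> t t_in; apply: f_ge0 (yY t t_in); case: (xr_min t t_in).
- by move=> t t_in; apply: polyhedral_gap (poly t t_in) (xr_min t t_in) (xX t t_in).
Qed.
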